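(* Let $\beta=\log_2(3/2)$ and \[ g(x,y)=\bigl((2x(1-x))^{1/\beta}+(x-y)^{1/\beta}\bigr)^\beta-2(x+y^2)+(x+y)^2 . \] Then $g(x,y)\ge0$ for all $x,y\in[0,1]$ with $x(2x-1)\le y\le x$. *)

From Stdlib Require Import Reals.
Open Scope R_scope.

(* Real power x^p for x >= 0, with the usual convention 0^p = 0 (p > 0).
   Stdlib's Rpower 0 p = exp (p * ln 0) = 1, so we patch the base 0. *)
Definition rpow (x p : R) : R :=
  if Rle_dec x 0 then 0 else Rpower x p.

Definition beta : R := ln (3/2) / ln 2.

Definition g (x y : R) : R :=
  rpow (rpow (2 * x * (1 - x)) (1 / beta) + rpow (x - y) (1 / beta)) beta
  - 2 * (x + y ^ 2) + (x + y) ^ 2.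

(* Put a = 2x(1-x) and b = x-y, so that 0 <= b <= a <= 1/2 and
   g x y = (a^p + b^p)^beta - (a + b^2) with p = 1/beta < 2.  Factoring out a
   gives (a^p + b^p)^beta = a (1+u)^beta with u = (b/a)^p in [0,1].  Concavity
   of t |-> t^beta on [1,2], together with 2^beta = 3/2, gives
   (1+u)^beta >= 1 + u/2, and a u / 2 >= a (b/a)^2 / 2 >= b^2 because p <= 2
   and a <= 1/2. *)

From Stdlib Require Import Reals Lra Psatz.
Open Scope R_scope.

Lemma rpow_0_l (p : R) : rpow 0 p = 0.
Proof. unfold rpow; destruct (Rle_dec 0 0); lra. Qed.

Lemma rpow_Rpower (x p : R) : 0 < x -> rpow x p = Rpower x p.
Proof. intros Hx; unfold rpow; destruct (Rle_dec x 0); [lra | reflexivity]. Qed.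

Lemma Rpower_1_l (q : R) : Rpower 1 q = 1.
Proof. unfold Rpower; rewrite ln_1, Rmult_0_r; apply exp_0. Qed.

Lemma Rpower_pos (x q : R) : 0 < Rpower x q.
Proof. apply exp_pos. Qed.

(* Bernoulli: combine [1 + t <= exp t] at t = (1-q) ln r and t = -q ln r with weights q and 1-q. *)
Lemma Rpower_le_Bernoulli (r q : R) :
  0 < r -> 0 <= q <= 1 -> Rpower r q <= 1 + q * (r - 1).
Proof.
  intros Hr Hq; unfold Rpower.
  set (L := ln r).
  assert (Hr_exp : exp L = r) by (apply exp_ln; exact Hr).
  pose proof (exp_pos (q * L)) as Hpos.
  assert (Hup : exp (q * L) * (1 + (1 - q) * L) <= exp (q * L) * exp ((1 - q) * L))
    by (apply Rmult_le_compat_l; [lra | apply exp_ineq1_le]).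
  rewrite <- exp_plus in Hup.
  replace (q * L + (1 - q) * L) with L in Hup by ring; rewrite Hr_exp in Hup.
  assert (Hlow : exp (q * L) * (1 + - (q * L)) <= exp (q * L) * exp (- (q * L)))
    by (apply Rmult_le_compat_l; [lra | apply exp_ineq1_le]).
  rewrite <- exp_plus, Rplus_opp_r, exp_0 in Hlow.
  nra.
Qed.

Lemma Rpower_concave (q x y l : R) :
  0 <= q <= 1 -> 0 < x -> 0 < y -> 0 <= l <= 1 ->
  (1 - l) * Rpower x q + l * Rpower y q <= Rpower ((1 - l) * x + l * y) q.
Proof.
  intros Hq Hx Hy Hl.
  set (t := (1 - l) * x + l * y).
  assert (Ht : 0 < t) by (unfold t; nra).
  assert (Hsplit : forall z, 0 < z -> Rpower z q = Rpower t q * Rpower (z / t) q).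
  { intros z Hz; rewrite Rpower_mult_distr; [| lra | apply Rdiv_lt_0_compat; lra].
    f_equal; field; lra. }
  pose proof (Rpower_le_Bernoulli (x / t) q ltac:(apply Rdiv_lt_0_compat; lra) Hq) as Bx.
  pose proof (Rpower_le_Bernoulli (y / t) q ltac:(apply Rdiv_lt_0_compat; lra) Hq) as By.
  assert (Hmean : (1 - l) * (1 + q * (x / t - 1)) + l * (1 + q * (y / t - 1)) = 1)
    by (unfold t in *; field; lra).
  assert (Hcomb : (1 - l) * Rpower (x / t) q + l * Rpower (y / t) q <= 1) by nra.
  rewrite (Hsplit x Hx), (Hsplit y Hy).
  pose proof (Rpower_pos t q) as Htq.
  nra.
Qed.

Lemma Rpower_le_exponent_anti (s p1 p2 : R) :
  0 < s <= 1 -> p1 <= p2 -> Rpower s p2 <= Rpower s p1.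
Proof.
  intros Hs Hp.
  assert (Hinv : forall p, Rpower s p = Rpower (/ s) (- p)).
  { intros p; unfold Rpower; rewrite ln_Rinv by lra; f_equal; ring. }
  rewrite !Hinv; apply Rle_Rpower; [| lra].
  rewrite <- Rinv_1; apply Rinv_le_contravar; lra.
Qed.

Lemma beta_bounds : 1/2 < beta < 1.
Proof.
  assert (Hln2 : 0 < ln 2) by (pose proof ln_lt_2; lra).
  assert (Hlt : ln (3/2) < ln 2) by (apply ln_increasing; lra).
  assert (Hgt : ln 2 < 2 * ln (3/2)).
  { replace (2 * ln (3/2)) with (ln (3/2 * (3/2))) by (rewrite ln_mult; lra).
    apply ln_increasing; lra. }
  unfold beta; split; apply Rmult_lt_reg_r with (ln 2); auto; field_simplify; lra.
Qed.

Lemma Rpower_2_beta : Rpower 2 beta = 3/2.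
Proof.
  assert (Hln2 : ln 2 <> 0) by (pose proof ln_lt_2; lra).
  unfold Rpower, beta.
  replace (ln (3/2) / ln 2 * ln 2) with (ln (3/2)) by (field; exact Hln2).
  apply exp_ln; lra.
Qed.

Lemma Rpower_beta_chord (u : R) : 0 <= u <= 1 -> 1 + u / 2 <= Rpower (1 + u) beta.
Proof.
  intros Hu.
  pose proof (Rpower_concave beta 1 2 u ltac:(pose proof beta_bounds; lra) Rlt_0_1
                ltac:(lra) Hu) as Hconc.
  rewrite Rpower_1_l, Rpower_2_beta in Hconc.
  replace ((1 - u) * 1 + u * 2) with (1 + u) in Hconc by ring.
  lra.
Qed.

Lemma Rpower_sum_inv_beta_lower_bound (a b : R) :
  0 < b <= a -> a <= 1/2 ->
  a + b ^ 2 <= Rpower (Rpower a (1 / beta) + Rpower b (1 / beta)) beta.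
Proof.
  intros Hb Ha; pose proof beta_bounds as Hbeta.
  set (p := 1 / beta).
  set (u := Rpower (b / a) p).
  assert (Hba : 0 < b / a <= 1).
  { split; [apply Rdiv_lt_0_compat; lra |].
    apply Rmult_le_reg_r with a; [lra |]; field_simplify; lra. }
  assert (Hu : 0 <= u <= 1).
  { split; [left; apply Rpower_pos |].
    rewrite <- (Rpower_O (b / a)) by lra; unfold u.
    apply Rpower_le_exponent_anti; [lra | unfold p; apply Rlt_le, Rdiv_lt_0_compat; lra]. }
  assert (Hfactor : Rpower b p = Rpower a p * u).
  { unfold u; rewrite Rpower_mult_distr by lra; f_equal; field; lra. }
  assert (Hpow : Rpower (Rpower a p + Rpower b p) beta = a * Rpower (1 + u) beta).
  { rewrite Hfactor, <- (Rmult_1_r (Rpower a p)) at 1; rewrite <- Rmult_plus_distr_l.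
    rewrite <- Rpower_mult_distr by (try apply Rpower_pos; lra).
    rewrite Rpower_mult; replace (p * beta) with 1 by (unfold p; field; lra).
    rewrite Rpower_1; lra. }
  assert (Hu_sq : (b / a) ^ 2 <= u).
  { rewrite <- Rpower_pow by lra; unfold u.
    apply Rpower_le_exponent_anti; [lra |].
    unfold p; simpl INR; apply Rmult_le_reg_r with beta; [lra |]; field_simplify; lra. }
  assert (Hb_sq : b ^ 2 <= a * u / 2).
  { apply Rle_trans with (a * (b / a) ^ 2 / 2); [| nra].
    replace (a * (b / a) ^ 2 / 2) with (b ^ 2 * / (2 * a)) by (field; lra).
    rewrite <- (Rmult_1_r (b ^ 2)) at 1; apply Rmult_le_compat_l; [nra |].
    rewrite <- Rinv_1; apply Rinv_le_contravar; lra. }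
  rewrite Hpow; pose proof (Rpower_beta_chord u Hu); nra.
Qed.

Lemma rpow_sum_inv_beta_lower_bound (a b : R) :
  0 <= b <= a -> a <= 1/2 ->
  a + b ^ 2 <= rpow (rpow a (1 / beta) + rpow b (1 / beta)) beta.
Proof.
  intros Hb Ha; pose proof beta_bounds as Hbeta.
  destruct (Req_dec b 0) as [-> | Hb0].
  - rewrite rpow_0_l, Rplus_0_r.
    destruct (Req_dec a 0) as [-> | Ha0]; [rewrite !rpow_0_l; simpl; lra |].
    assert (Hapos : 0 < a) by (destruct Hb as [_ [Hlt | Heq]]; [lra | congruence]).
    rewrite (rpow_Rpower a) by lra; rewrite rpow_Rpower by apply Rpower_pos.
    rewrite Rpower_mult; replace (1 / beta * beta) with 1 by (field; lra).
    rewrite Rpower_1; lra.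
  - rewrite (rpow_Rpower a), (rpow_Rpower b) by lra.
    rewrite rpow_Rpower by (apply Rplus_lt_0_compat; apply Rpower_pos).
    apply Rpower_sum_inv_beta_lower_bound; lra.
Qed.

Theorem proposition2p3 (x y : R) :
  0 <= x <= 1 -> 0 <= y <= 1 -> x * (2 * x - 1) <= y <= x -> 0 <= g x y.
Proof.
  intros Hx Hy Hxy.
  set (a := 2 * x * (1 - x)); set (b := x - y).
  assert (Hg : g x y = rpow (rpow a (1 / beta) + rpow b (1 / beta)) beta - (a + b ^ 2))
    by (unfold g, a, b; ring).
  assert (Hba : 0 <= b <= a) by (unfold a, b; nra).
  assert (Ha : a <= 1/2) by (unfold a; pose proof (pow2_ge_0 (2 * x - 1)); nra).
  rewrite Hg; pose proof (rpow_sum_inv_beta_lower_bound a b Hba Ha); lra.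
Qed.
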